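(* Let $\beta>2\alpha>0$ with $\beta+2\alpha>1$, and let $\varphi_N(x)=\frac12x^TAx-\sum_{k=1}^{s_N}\log\cosh(x^TAe_k)$ for $x\in\mathbb{R}^{s_N}$. Then $\varphi_N$ attains its minimum at $x=\overrightarrow{m}^*$ and at $x=-\overrightarrow{m}^*$, where $\overrightarrow{m}^*=(m^*,\dots,m^* )\in\mathbb{R}^{s_N}$ and $m^*=m^*(\beta+2\alpha)$ is the largest solution of $x=\tanh((\beta+2\alpha)x)$.
   Context: $A$ is the $s_N\times s_N$ symmetric circulant matrix $A=\beta I+\alpha(P+P^T)$, where $P$ is the cyclic shift matrix (so $A_{kk}=\beta$, $A_{k,k\pm1}=\alpha$ with indices mod $s_N$); $e_k$ are the standard basis vectors of $\mathbb{R}^{s_N}$. *)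

From HB Require Import structures.
From mathcomp Require Import all_boot all_order all_algebra.
From mathcomp Require Import all_classical all_reals all_analysis.
Set Implicit Arguments. Unset Strict Implicit. Unset Printing Implicit Defensive.
Import Order.TTheory GRing.Theory Num.Theory.
Local Open Scope ring_scope.

Definition cosh {R : realType} (x : R) : R := (expR x + expR (- x)) / 2.
Definition sinh {R : realType} (x : R) : R := (expR x - expR (- x)) / 2.
Definition tanh {R : realType} (x : R) : R := sinh x / cosh x.

Definition shift_mx {R : realType} (n : nat) : 'M[R]_n :=
  \matrix_(i < n, j < n) ((i == ordS j)%:R).

Definition circA {R : realType} (n : nat) (alpha beta : R) : 'M[R]_n :=
  beta%:M + alpha *: (shift_mx n + (shift_mx n)^T).

Definition e_ {R : realType} (n : nat) (k : 'I_n) : 'cV[R]_n := delta_mx k 0.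

Definition phiN {R : realType} (n : nat) (alpha beta : R) (x : 'cV[R]_n) : R :=
  2^-1 * (x^T *m circA n alpha beta *m x) 0 0
  - \sum_(k < n) ln (cosh ((x^T *m circA n alpha beta *m e_ k) 0 0)).

(* Put c = beta + 2 alpha, u = c m^* and y = A x.  The fixed-point equation
   says tanh u / u = 1/c, and since tanh is concave on [0, oo), tanh y / y
   decreases there; hence y |-> ln cosh y - y^2/(2c) is maximal at y = +-u.
   This bounds every term of phi_N from below:
     phi_N(x) >= sum_k y_k (c x_k - y_k) / (2c) + s_N (c m^*^2 / 2 - ln cosh u),
   with equality at x = +-m^*, where y = +-u.  The remaining sum is
   x^T A (c - A) x >= 0, a sum of squares of cyclic differences because
   beta >= 2 alpha.  Maximality of m^* is only used to know that m^* > 0, which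
   follows from c > 1 by the intermediate value theorem. *)

From HB Require Import structures.
From mathcomp Require Import all_boot all_order all_algebra.
From mathcomp Require Import all_classical all_reals all_analysis.
From mathcomp Require Import ring lra.
Import Order.TTheory GRing.Theory Num.Theory.
Import numFieldNormedType.Exports.
Local Open Scope classical_set_scope.
Local Open Scope ring_scope.

Section MeanValue.
Context {R : realType} {f df : R -> R}.
Hypothesis f_df : forall x : R, is_derive x (1 : R) f (df x).

Lemma continuous_of_derive (i : interval R) : {within [set` i], continuous f}.
Proof. by apply: derivable_within_continuous => x _; case: (f_df x). Qed.

Lemma MVT_lt {a b} : a < b -> exists2 c, a < c < b & f b - f a = df c * (b - a).
Proof.
move=> ab; have [c cab ->] := MVT ab (fun x _ => f_df x) (continuous_of_derive `[a, b]).
by exists c; rewrite // -in_itv.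
Qed.

Lemma ger0_derive_le {a b} :
  a <= b -> (forall c, a < c < b -> 0 <= df c) -> f a <= f b.
Proof.
rewrite le_eqVlt => /predU1P[-> // | ab] df_ge0.
have [c cab fE] := MVT_lt ab.
by rewrite -subr_ge0 fE mulr_ge0 ?df_ge0 // subr_ge0 ltW.
Qed.

Lemma ler0_derive_ge {a b} :
  a <= b -> (forall c, a < c < b -> df c <= 0) -> f b <= f a.
Proof.
rewrite le_eqVlt => /predU1P[-> // | ab] df_le0.
have [c cab fE] := MVT_lt ab.
by rewrite -subr_le0 fE mulr_le0_ge0 ?df_le0 // subr_ge0 ltW.
Qed.

Lemma chord_slope_le {a b c} :
  (forall s t, a <= s -> s <= t -> df t <= df s) -> a < b -> b < c ->
  (f c - f b) * (b - a) <= (f b - f a) * (c - b).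
Proof.
move=> df_anti ab bc.
have [s /andP[a_s sb] ->] := MVT_lt ab.
have [t /andP[bt _] ->] := MVT_lt bc.
rewrite mulrAC ler_pM2r ?subr_gt0 // ler_pM2r ?subr_gt0 //.
by apply: df_anti; rewrite ltW // (lt_trans sb bt).
Qed.

End MeanValue.

Section Hyperbolic.
Context {R : realType}.
Implicit Types a b c u y z : R.

Lemma expR_mulN y : expR y * expR (- y) = 1 :> R.
Proof. by rewrite -expRD subrr expR0. Qed.

Lemma cosh_gt0 y : 0 < cosh y :> R.
Proof. by rewrite /cosh divr_gt0 // addr_gt0 // expR_gt0. Qed.

Lemma coshN y : cosh (- y) = cosh y :> R.
Proof. by rewrite /cosh opprK addrC. Qed.

Lemma cosh_sqr_sub_sinh_sqr y : cosh y ^+ 2 - sinh y ^+ 2 = 1 :> R.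
Proof.
rewrite /cosh /sinh -[RHS](expR_mulN y).
by set e := expR y; set e' := expR (- y); field.
Qed.

Lemma ler_cosh {a b} : 0 <= a -> a <= b -> cosh a <= cosh b :> R.
Proof.
move=> a0 ab; rewrite /cosh ler_pM2r ?invr_gt0 ?ltr0n //.
have := expR_mulN a; have := expR_mulN b.
have AB : expR a <= expR b by rewrite ler_expR.
have AB' : expR (- a) * expR (- b) <= 1.
  by rewrite -expRD -expR0 ler_expR -opprD oppr_le0 addr_ge0 // (le_trans a0).
move: AB AB'; set A := expR a; set A' := expR (- a); set B := expR b.
set B' := expR (- b) => AB AB' hB hA.
have : 0 <= (B - A) * (1 - A' * B') by rewrite mulr_ge0 // subr_ge0.
have -> : (B - A) * (1 - A' * B') = B - A - A' * (B * B') + (A * A') * B' by ring.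
rewrite hA hB; lra.
Qed.

Lemma tanhE z : tanh z = 1 - 2 / (expR (2 * z) + 1) :> R.
Proof.
have e0 := expR_gt0 z.
have -> : expR (2 * z) = expR z * expR z by rewrite -expRD mulr_natl mulr2n.
rewrite /tanh /sinh /cosh expRN.
by field; rewrite !gt_eqF ?addr_gt0 ?mulr_gt0 ?invr_gt0.
Qed.

Lemma tanh0 : tanh 0 = 0 :> R.
Proof. by rewrite tanhE mulr0 expR0 divff ?subrr. Qed.

Lemma tanh_lt1 z : tanh z < 1 :> R.
Proof. by rewrite tanhE gtrDl oppr_lt0 divr_gt0 ?addr_gt0 ?expR_gt0. Qed.

Lemma tanh_ge z : 0 <= z -> z / (1 + z) <= tanh z :> R.
Proof.
move=> z0; rewrite tanhE.
have z1 : 0 < 1 + z by lra.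
have E := expR_ge1Dx (2 * z).
have -> : z / (1 + z) = 1 - 2 / ((1 + 2 * z) + 1) by field; lra.
by rewrite lerD2l lerN2 ler_pM2l // lef_pV2 ?posrE; lra.
Qed.

Lemma is_derive_expRN y : is_derive y 1 (fun x : R => expR (- x)) (- expR (- y)).
Proof.
apply: is_derive_eq (is_derive1_comp (is_derive_expR (- y)) (is_deriveNid y 1)) _.
by rewrite mulrN1.
Qed.

Lemma is_derive_cosh y : is_derive y 1 (@cosh R) (sinh y).
Proof.
have -> : @cosh R = 2^-1 \*: (@expR R + (fun x => expR (- x))).
  by apply/funext => x; rewrite /cosh /= mulrC.
apply: is_derive_eq (is_deriveZ _ (is_deriveD (is_derive_expR y) (is_derive_expRN y))) _.
by rewrite /sinh mulrC.
Qed.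

Lemma is_derive_sinh y : is_derive y 1 (@sinh R) (cosh y).
Proof.
have -> : @sinh R = 2^-1 \*: (@expR R - (fun x => expR (- x))).
  by apply/funext => x; rewrite /sinh /= mulrC.
apply: is_derive_eq (is_deriveZ _ (is_deriveB (is_derive_expR y) (is_derive_expRN y))) _.
by rewrite /cosh opprK mulrC.
Qed.

Lemma is_derive_tanh y : is_derive y 1 (@tanh R) ((cosh y)^-2).
Proof.
have -> : @tanh R = @sinh R * (fun x => (cosh x)^-1) by [].
have c0 : cosh y != 0 by rewrite gt_eqF ?cosh_gt0.
apply: is_derive_eq (is_deriveM (is_derive_sinh y) (is_deriveV c0 (is_derive_cosh y))) _.
rewrite -[LHS]divr1 -(cosh_sqr_sub_sinh_sqr y) /GRing.scale /=; field.
by rewrite c0 cosh_sqr_sub_sinh_sqr oner_neq0.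
Qed.

Lemma is_derive_lncosh y : is_derive y 1 (fun x => ln (@cosh R x)) (tanh y).
Proof.
apply: is_derive_eq (is_derive1_comp (is_derive1_ln (cosh_gt0 y)) (is_derive_cosh y)) _.
by rewrite /tanh mulrC.
Qed.

Lemma tanh_div_le y u : 0 < y -> y <= u -> tanh u / u <= tanh y / y.
Proof.
move=> y0; rewrite le_eqVlt => /predU1P[-> // | yu].
have u0 := lt_trans y0 yu.
have cosh_anti (s t : R) : 0 <= s -> s <= t -> (cosh t)^-2 <= (cosh s)^-2.
  move=> s0 st; rewrite lef_pV2 ?posrE ?exprn_gt0 ?cosh_gt0 //.
  by have := cosh_gt0 s; have := ler_cosh s0 st; nra.
have := chord_slope_le is_derive_tanh cosh_anti y0 yu.
rewrite tanh0 !subr0 => chord.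
rewrite ler_pdivrMr // mulrAC ler_pdivlMr //; lra.
Qed.

Lemma lncosh_sub_sqr_le u y : 0 < u ->
  ln (cosh y) - tanh u / u * y ^+ 2 / 2 <= ln (cosh u) - tanh u * u / 2.
Proof.
move=> u0; pose k := tanh u / u.
pose G x := ln (cosh x) - k * x ^+ 2 / 2.
have G_der (x : R) : is_derive x 1 G (tanh x - k * x).
  have -> : G = (fun z => ln (cosh z)) - cst (k / 2) * (id * id).
    by apply/funext => z; rewrite /G !fctE /=; field.
  apply: is_derive_eq (is_deriveB (is_derive_lncosh x) (is_deriveM (is_derive_cst _ x 1)
    (is_deriveM (is_derive_id x 1) (is_derive_id x 1)))) _.
  by rewrite /GRing.scale /=; field.
have GN (x : R) : G (- x) = G x by rewrite /G coshN sqrrN.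
have Gu : G u = ln (cosh u) - tanh u * u / 2 by rewrite /G /k; field; rewrite gt_eqF.
rewrite -/(G y) -Gu.
wlog y0 : y / 0 <= y.
  move=> H; have [/H //|/ltW y_le0] := leP 0 y.
  by rewrite -GN H // oppr_ge0.
have dG_factor x : 0 < x -> tanh x - k * x = x * (tanh x / x - k).
  by move=> x0; field; rewrite gt_eqF.
have [yu|uy] := leP y u.
  apply: (ger0_derive_le G_der yu) => x /andP[yx xu].
  have x0 := le_lt_trans y0 yx.
  rewrite dG_factor // mulr_ge0 ?(ltW x0) // subr_ge0.
  exact: tanh_div_le (ltW xu).
apply: (ler0_derive_ge G_der (ltW uy)) => x /andP[ux xy].
have x0 := lt_trans u0 ux.
rewrite dG_factor // pmulr_rle0 // subr_le0.
exact: tanh_div_le (ltW ux).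
Qed.

Lemma exists_pos_fixed_tanh {c} : 1 < c -> exists2 t : R, 0 < t & t = tanh (c * t).
Proof.
move=> c1; have c0 : 0 < c by lra.
pose f t := tanh (c * t) - t.
have f_der (t : R) : is_derive t 1 f (c * (cosh (c * t))^-2 - 1).
  apply: is_derive_eq (is_deriveB (is_derive1_comp (is_derive_tanh (c * t))
    (is_deriveZ c (is_derive_id t 1))) (is_derive_id t 1)) _.
  by rewrite /GRing.scale /= mulr1 mulrC.
pose e := (c - 1) / c.
have e0 : 0 < e by rewrite divr_gt0 // subr_gt0.
have e1 : e <= 1 by rewrite ler_pdivrMr // mul1r; lra.
have fe : 0 <= f e.
  have ce : c * e = c - 1 by rewrite /e mulrC divfK // gt_eqF.
  have eE : e = (c - 1) / (1 + (c - 1)) by rewrite [1 + _]addrC subrK.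
  by rewrite /f subr_ge0 ce eE tanh_ge // subr_ge0 ltW.
have f1 : f 1 <= 0 by rewrite /f subr_le0 ltW // tanh_lt1.
have [|t /[!in_itv] /andP[et _] ft] := IVT e1 (continuous_of_derive f_der `[e, 1]) (v := 0).
  by rewrite ge_min le_max f1 fe orbT.
by exists t; [exact: lt_le_trans et | apply/esym/eqP; rewrite -subr_eq0 -/(f t) ft].
Qed.

End Hyperbolic.

Lemma sumr_ordS_sub (V : zmodType) n (F : 'I_n -> V) :
  \sum_(k < n) (F (ordS k) - F k) = 0.
Proof. by rewrite sumrB [X in _ - X](reindex_inj (@ordS_inj n)) subrr. Qed.

Lemma sumr_mul_delta (R : pzSemiRingType) n (F : 'I_n -> R) a :
  \sum_(j < n) F j * (j == a)%:R = F a.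
Proof.
rewrite (bigD1 a) //= eqxx mulr1 big1 ?addr0 // => j /negbTE ->.
by rewrite mulr0.
Qed.

Section CirculantForm.
Context {R : realType} {n : nat} {alpha beta : R}.
Local Notation A := (circA n alpha beta).

Lemma trmx_circA : A^T = A.
Proof.
by rewrite /circA !linearD /= tr_scalar_mx !linearZ /= trmxK [alpha *: _ + _]addrC.
Qed.

Lemma form_circA_e (x : 'cV[R]_n) k : (x^T *m A *m e_ k) 0 0 = (A *m x) k 0.
Proof.
transitivity ((x^T *m A *m e_ k)^T 0 0); first by rewrite [RHS]mxE.
by rewrite !trmx_mul trmxK trmx_circA /e_ trmx_delta -rowE mxE.
Qed.

Lemma circA_mulE (x : 'cV[R]_n) k :
  (A *m x) k 0 = beta * x k 0 + alpha * (x (ordS k) 0 + x (ord_pred k) 0).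
Proof.
have Akj j : A k j * x j 0 = beta * (x j 0 * (j == k)%:R)
    + alpha * (x j 0 * (j == ordS k)%:R + x j 0 * (j == ord_pred k)%:R).
  rewrite /circA /shift_mx !mxE eq_sym.
  have -> : (k == ordS j) = (j == ord_pred k).
    by apply/eqP/eqP => [->|->]; rewrite ?ordSK ?ord_predK.
  rewrite -mulr_natr; ring.
rewrite mxE (eq_bigr _ (fun j _ => Akj j)) big_split /= -!mulr_sumr big_split /=.
by rewrite !sumr_mul_delta.
Qed.

Lemma circA_const (m : R) :
  A *m (const_mx m : 'cV_n) = const_mx ((beta + 2 * alpha) * m).
Proof. by apply/matrixP => i j; rewrite !ord1 circA_mulE !mxE; ring. Qed.

Lemma phiN_sumE (x : 'cV[R]_n) : phiN alpha beta x =
  \sum_(k < n) (x k 0 * (A *m x) k 0 / 2 - ln (cosh ((A *m x) k 0))).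
Proof.
rewrite /phiN -mulmxA mxE mulr_sumr -sumrB; apply: eq_bigr => k _.
by rewrite form_circA_e mxE; congr (_ - _); ring.
Qed.

Lemma phiN_opp (x : 'cV[R]_n) : phiN alpha beta (- x) = phiN alpha beta x.
Proof.
rewrite !phiN_sumE; apply: eq_bigr => k _.
by rewrite mulmxN !mxE mulrNN coshN.
Qed.

(* With c = beta + 2 alpha, A (c - A) = alpha (beta - 2 alpha) L_1 + alpha^2 L_2,
   where L_j is the Laplacian of the cycle with steps of length j; termwise the
   two sides differ by F (ordS k) - F k, which sums to 0 around the cycle. *)
Lemma circA_gap_ge0 (x : 'cV[R]_n) : 0 <= alpha -> 2 * alpha <= beta ->
  0 <= \sum_(k < n) (A *m x) k 0 * ((beta + 2 * alpha) * x k 0 - (A *m x) k 0).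
Proof.
move=> a0 ab; pose H (a b : R) := 2 * alpha * a * a + (beta - 2 * alpha) * a * b - beta * b * b.
pose F k := H (x (ord_pred k) 0) (x k 0).
have termE k : (A *m x) k 0 * ((beta + 2 * alpha) * x k 0 - (A *m x) k 0) =
    alpha * ((beta - 2 * alpha) * (x (ordS k) 0 - x k 0) ^+ 2
             + alpha * (x (ordS k) 0 - x (ord_pred k) 0) ^+ 2)
    + alpha * (F (ordS k) - F k).
  by rewrite /F ordSK circA_mulE /H; ring.
rewrite (eq_bigr _ (fun k _ => termE k)) big_split /= -!mulr_sumr sumr_ordS_sub.
rewrite mulr0 addr0 mulr_ge0 //; apply: sumr_ge0 => k _.
by rewrite addr_ge0 // mulr_ge0 ?sqr_ge0 // subr_ge0.
Qed.

End CirculantForm.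

Lemma phiN_const_le {R : realType} {n} {alpha beta m : R} (x : 'cV[R]_n) :
  0 <= alpha -> 2 * alpha <= beta -> 0 < m ->
  m = tanh ((beta + 2 * alpha) * m) ->
  phiN alpha beta (const_mx m : 'cV_n) <= phiN alpha beta x.
Proof.
move=> a0 ab m0 hm; set c := beta + 2 * alpha in hm.
have c0 : 0 < c.
  have c_ge0 : 0 <= c by rewrite /c; lra.
  rewrite lt_def c_ge0 andbT; apply: contraTneq m0 => c_eq0.
  by rewrite hm c_eq0 mul0r tanh0 ltxx.
set u := c * m in hm; have u0 : 0 < u by rewrite mulr_gt0.
have slope : tanh u / u = c^-1.
  by rewrite -hm /u invfM mulrCA divff ?mulr1 // gt_eqF.
have lncosh_le y : ln (cosh y) - c^-1 * y ^+ 2 / 2 <= ln (cosh u) - m * u / 2.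
  by have := lncosh_sub_sqr_le u y u0; rewrite slope -hm.
pose y k := (circA n alpha beta *m x) k 0.
have term_ge k : (2 * c)^-1 * (y k * (c * x k 0 - y k)) + (m * u / 2 - ln (cosh u))
    <= x k 0 * y k / 2 - ln (cosh (y k)).
  have -> : (2 * c)^-1 * (y k * (c * x k 0 - y k))
      = x k 0 * y k / 2 - c^-1 * y k ^+ 2 / 2 by field; rewrite gt_eqF.
  by have := lncosh_le (y k); lra.
rewrite !phiN_sumE circA_const (eq_bigr (fun=> m * u / 2 - ln (cosh u))).
  apply: le_trans (ler_sum _ (fun k _ => term_ge k)).
  rewrite [X in _ <= X]big_split /= lerDr -mulr_sumr mulr_ge0 ?circA_gap_ge0 //.
  by rewrite invr_ge0 mulr_ge0 // ltW.
by move=> k _; rewrite !mxE.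
Qed.

Theorem lemma4p5 (R : realType) (n : nat) (alpha beta mstar : R) :
  0 < alpha -> 2 * alpha < beta -> 1 < beta + 2 * alpha ->
  mstar = tanh ((beta + 2 * alpha) * mstar) ->
  (forall y : R, y = tanh ((beta + 2 * alpha) * y) -> y <= mstar) ->
  forall x : 'cV[R]_n,
    phiN alpha beta (const_mx mstar : 'cV[R]_n) <= phiN alpha beta x /\
    phiN alpha beta (- const_mx mstar : 'cV[R]_n) <= phiN alpha beta x.
Proof.
move=> alpha_gt0 beta_gt c_gt1 hm hmax x.
have [t t_gt0 ht] := exists_pos_fixed_tanh c_gt1.
have m_gt0 : 0 < mstar := lt_le_trans t_gt0 (hmax t ht).
have min_const := phiN_const_le x (ltW alpha_gt0) (ltW beta_gt) m_gt0 hm.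
by split; rewrite ?phiN_opp.
Qed.
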